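(* Let $G$ be a directed graph with $n$ nodes and $V_C$ a zero forcing set of $G$ with $|V_C|=m$. Suppose $G\in\mathcal{G}^{\mathcal{C},T}$ for a set $\mathcal{C}=\{C_1,\ldots,C_m\}$ of node-disjoint chains covering $V(G)$ with set of sources $V_C$ and a time function $T$ for $\mathcal{C}$. Then $E(G)\setminus\bigcup_{i=1}^mE(C_i)$ is a critical subtractive edge-set of $G$, and $n^c_{\mathrm{sub}}(G)=|E(G)|-n+m$.
   Context: Graphs are directed, self-loops allowed; $V(G)=\{1,\ldots,n\}$; $G-E'$ has node set $V(G)$ and edge set $E(G)\setminus E'$. $\mathcal{Q}(G)=\{A\in\mathbb{R}^{n\times n}:\text{for } i\neq j,\ A_{ij}\neq0\iff(j,i)\in E(G)\}$. For $V_C=\{j_1,\ldots,j_m\}$, $B=[e_{j_1},\ldots,e_{j_m}]$; the LTI network on $G$ with control nodes $V_C$ is strongly structurally controllable (SSC) if $(A,B)$ is controllable for all $A\in\mathcal{Q}(G)$. Zero forcing: with nodes colored black/white, a black node with exactly one white out-neighbor turns it black; $S$ is a zero forcing set if starting from black set $S$ and repeating this rule makes all nodes black. A subtractive edge-set is a set $E^*\subseteq E(G)$ such that for every $E'\subseteq E^*$, the network on $G-E'$ with control nodes $V_C$ is SSC. The critical subtractive number $n^c_{\mathrm{sub}}(G)$ is the maximum $|E^*|$ over subtractive edge-sets, and a critical subtractive edge-set is one of that cardinality. A chain is a directed path graph with source (start node) and sink (end node); for a non-sink $v$, $v+1$ is its out-neighbor. For node-disjoint chains $\mathcal{C}=\{C_1,\ldots,C_m\}$,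 $V=\bigcup_iV(C_i)$, $\gamma=|V|-m+1$, a time function is $T:V\to\{1,\ldots,\gamma\}$ with (1) $T(v)=1$ for every source; (2) distinct non-source nodes get distinct values; (3) $T(v)<T(v+1)$ for non-sink $v$. $T_{\max}(v)=\gamma$ for a sink $v$, else $T_{\max}(v)=T(v+1)-1$. $\mathcal{G}^{\mathcal{C},T}$ is the set of graphs $G$ with $V(G)=V$, $\bigcup_iE(C_i)\subseteq E(G)$, and $(u,v)\notin E(G)$ whenever $(u,v)\notin\bigcup_iE(C_i)$ and $T_{\max}(u)<T(v)$. *)

From HB Require Import structures.
From mathcomp Require Import all_boot all_order all_algebra.
From mathcomp Require Import Rstruct.
Set Implicit Arguments. Unset Strict Implicit. Unset Printing Implicit Defensive.
Import GRing.Theory Num.Theory.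
Local Open Scope ring_scope.

(* Node set V(G) = {1,...,n} is represented by 'I_n; a directed graph (self-loops
   allowed) on it is given by its edge set E : {set 'I_n * 'I_n}; (u,v) is the edge u -> v. *)
Notation edgeset n := {set 'I_n * 'I_n}.

Definition inQ (n : nat) (E : edgeset n) (A : 'M[Rdefinitions.R]_n) : Prop :=
  forall i j : 'I_n, i != j -> (A i j != 0 <-> (j, i) \in E).

(* B = [e_{j_1}, ..., e_{j_m}] for V_C = {j_1,...,j_m} (ordered by enum). *)
Definition Bmat (n : nat) (VC : {set 'I_n}) : 'M[Rdefinitions.R]_(n, #|VC|) :=
  \matrix_(i, k) (i == enum_val k)%:R.

Definition controllable (n m : nat) (A : 'M[Rdefinitions.R]_n) (B : 'M[Rdefinitions.R]_(n, m)) : Prop :=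
  \rank (\mxrow_(k < n) (A ^+ k *m B)) = n.

Definition SSC (n : nat) (E : edgeset n) (VC : {set 'I_n}) : Prop :=
  forall A : 'M[Rdefinitions.R]_n, inQ E A -> controllable A (Bmat VC).

Definition subtractive (n : nat) (E : edgeset n) (VC : {set 'I_n}) (Es : edgeset n) : Prop :=
  Es \subset E /\ forall E' : edgeset n, E' \subset Es -> SSC (E :\: E') VC.

Definition is_ncsub (n : nat) (E : edgeset n) (VC : {set 'I_n}) (k : nat) : Prop :=
  (exists Es : edgeset n, subtractive E VC Es /\ #|Es| = k) /\
  (forall Es : edgeset n, subtractive E VC Es -> (#|Es| <= k)%N).

Definition critical_subtractive (n : nat) (E : edgeset n) (VC : {set 'I_n}) (Es : edgeset n) : Prop :=
  subtractive E VC Es /\ is_ncsub E VC #|Es|.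

(* Zero forcing: one round of the colour-change rule applied by all black nodes
   that have exactly one white out-neighbour. *)
Definition force_step (n : nat) (E : edgeset n) (S : {set 'I_n}) : {set 'I_n} :=
  S :|: [set w | [exists u, [&& u \in S, w \notin S, (u, w) \in E &
                     [forall w', ((u, w') \in E) && (w' \notin S) ==> (w' == w)]]]].

Definition zero_forcing_set (n : nat) (E : edgeset n) (S : {set 'I_n}) : Prop :=
  exists k, iter k (force_step E) S = setT.

(* Chains: a chain is a nonempty duplicate-free sequence of nodes [v_1; ...; v_l]
   with source v_1, sink v_l and edges (v_i, v_{i+1}). *)
Definition chain_edges (n : nat) (c : seq 'I_n) : seq ('I_n * 'I_n) := zip c (behead c).

Definition chainsE (n : nat) (cs : seq (seq 'I_n)) : edgeset n :=
  [set e | has (fun c => e \in chain_edges c) cs].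

Definition chain_sources (n : nat) (cs : seq (seq 'I_n)) : {set 'I_n} :=
  [set v | has (fun c => ohead c == Some v) cs].

Definition disjoint_chain_cover (n : nat) (cs : seq (seq 'I_n)) : Prop :=
  [/\ all (fun c => c != [::]) cs, uniq (flatten cs) & forall v : 'I_n, v \in flatten cs].

Definition gamma (n : nat) (cs : seq (seq 'I_n)) : nat := (n - size cs + 1)%N.

Definition time_function (n : nat) (cs : seq (seq 'I_n)) (T : 'I_n -> nat) : Prop :=
  [/\ forall v, (1 <= T v <= gamma cs)%N,
      forall v, v \in chain_sources cs -> T v = 1%N,
      forall u v, u \notin chain_sources cs -> v \notin chain_sources cs ->
                  u != v -> T u != T v
    & forall u v, (u, v) \in chainsE cs -> (T u < T v)%N].

Definition Tmax (n : nat) (cs : seq (seq 'I_n)) (T : 'I_n -> nat) (v : 'I_n) : nat :=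
  match [pick w | (v, w) \in chainsE cs] with
  | Some w => (T w).-1
  | None => gamma cs
  end.

(* G in \mathcal{G}^{C,T} (V(G) = V is built in: the chains cover 'I_n). *)
Definition in_graph_class (n : nat) (cs : seq (seq 'I_n)) (T : 'I_n -> nat) (E : edgeset n) : Prop :=
  chainsE cs \subset E /\
  forall u v, (u, v) \in E -> (u, v) \notin chainsE cs -> ~ (Tmax cs T u < T v)%N.

From HB Require Import structures.
From mathcomp Require Import all_boot all_order all_algebra.
From mathcomp Require Import Rstruct zify.
Set Implicit Arguments. Unset Strict Implicit. Unset Printing Implicit Defensive.
Import GRing.Theory.

(* Let x annihilate [B, AB, ..., A^(n-1) B] for some A in Q(G).  By induction on
   the time t, (x A^j)_v = 0 whenever T v <= t + 1 and j + t < n: for t = 0 the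
   node v is a control node, and if v has chain predecessor u then
   0 = (x A^(j+1))_u = sum_i (x A^j)_i A_iu, where every i <> v with A_iu <> 0 is
   u itself or a non-chain out-neighbour of u, which the time constraints force
   to have T i <= T_max(u) = T v - 1; as A_vu <> 0 this gives (x A^j)_v = 0.
   Hence x = 0, and the argument survives the deletion of any non-chain edges.
   Conversely, SSC forces every non-control node to keep an in-edge from another
   node (otherwise e_v annihilates the controllability matrix), so at most
   |E| - (n - m) edges can be removed, while the chain edges, having pairwise
   distinct non-source heads, number at most n - m. *)

Section ChainSeq.
Variable T : eqType.
Implicit Types (s : seq T) (cs : seq (seq T)).

Lemma mem_zip_behead s x y : (x, y) \in zip s (behead s) -> x \in s /\ y \in behead s.
Proof.
case: s => [|a s] //=; elim: s a => [|b s IH] a //=.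
move=> /predU1P[[-> ->]|/IH[x_in y_in]]; first by split; apply: mem_head.
by split; rewrite in_cons ?x_in ?y_in orbT.
Qed.

Lemma zip_behead_eq s x y x' y' : uniq s ->
  (x, y) \in zip s (behead s) -> (x', y') \in zip s (behead s) -> (x == x') = (y == y').
Proof.
case: s => [|a s] //=; elim: s a => [|b s IH] a //= /andP[a_notin uniq_bs].
have b_notin : b \notin s by case/andP: uniq_bs.
have fresh u w : (u, w) \in zip (b :: s) s -> (a == u) = false /\ (b == w) = false.
  case/mem_zip_behead => u_in w_in; split; apply/negbTE.
    by apply: contraNneq a_notin => ->.
  by apply: contraNneq b_notin => ->.
rewrite !in_cons => /predU1P[[-> ->]|e1] /predU1P[[-> ->]|e2].
- by rewrite !eqxx.
- by have [-> ->] := fresh _ _ e2.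
- by rewrite [x == _]eq_sym [y == _]eq_sym; have [-> ->] := fresh _ _ e1.
- exact: IH uniq_bs e1 e2.
Qed.

Lemma zip_behead_pred s y : y \in behead s -> exists x, (x, y) \in zip s (behead s).
Proof.
case: s => [|a s] //=; elim: s a => [|b s IH] a //=.
rewrite in_cons => /predU1P[->|/(IH b)[x e]]; first by exists a; rewrite mem_head.
by exists x; rewrite in_cons e orbT.
Qed.

Lemma uniq_flatten_mem_eq cs c1 c2 x : uniq (flatten cs) ->
  c1 \in cs -> c2 \in cs -> x \in c1 -> x \in c2 -> c1 = c2.
Proof.
elim: cs => [|d cs IH] //=; rewrite cat_uniq => /and3P[_ disj uniq_cs].
have notin_d c : c \in cs -> x \in c -> x \notin d.
  by move=> c_cs x_c; apply: contra disj => x_d; apply/hasP; exists x => //; apply/flattenP; exists c.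
rewrite !in_cons => /predU1P[->|c1_cs] /predU1P[->|c2_cs] // x1 x2.
- by move: (notin_d _ c2_cs x2); rewrite x1.
- by move: (notin_d _ c1_cs x1); rewrite x2.
- exact: IH.
Qed.

Lemma uniq_flatten_mem cs c : uniq (flatten cs) -> c \in cs -> uniq c.
Proof.
elim: cs => [|d cs IH] //=; rewrite cat_uniq => /and3P[uniq_d _ uniq_cs].
by rewrite in_cons => /predU1P[->|/IH]; last exact.
Qed.

End ChainSeq.

Section ChainCover.
Variables (n : nat) (cs : seq (seq 'I_n)).
Hypothesis cover : disjoint_chain_cover cs.

Lemma chainsEP e : reflect (exists2 c, c \in cs & e \in chain_edges c) (e \in chainsE cs).
Proof. by rewrite inE; apply: hasP. Qed.

Lemma chainsE_eq u v u' v' : (u, v) \in chainsE cs -> (u', v') \in chainsE cs ->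
  (u == u') = (v == v').
Proof.
case: cover => _ uniq_cs _.
move=> /chainsEP[c c_cs e] /chainsEP[c' c'_cs e'].
have [u_c /mem_behead v_c] := mem_zip_behead e.
have [u_c' /mem_behead v_c'] := mem_zip_behead e'.
have [/orP share|] := boolP ((u == u') || (v == v')).
  have c_eq : c = c'.
    case: share => /eqP eq; subst.
      exact: uniq_flatten_mem_eq uniq_cs c_cs c'_cs u_c u_c'.
    exact: uniq_flatten_mem_eq uniq_cs c_cs c'_cs v_c v_c'.
  by subst c'; apply: zip_behead_eq e e'; apply: uniq_flatten_mem c_cs.
by rewrite negb_or => /andP[/negbTE-> /negbTE->].
Qed.

Lemma chainsE_target_notin_sources u v : (u, v) \in chainsE cs -> v \notin chain_sources cs.
Proof.
case: cover => _ uniq_cs _.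
move=> /chainsEP[c c_cs /mem_zip_behead[_ v_behead]].
rewrite inE; apply/hasP => -[[|a t] //= c'_cs /eqP[a_v]]; subst a.
have c_eq := uniq_flatten_mem_eq uniq_cs c'_cs c_cs (mem_head v t) (mem_behead v_behead).
subst c; have /= /andP[v_notin _] := uniq_flatten_mem uniq_cs c_cs.
by rewrite v_behead in v_notin.
Qed.

Lemma chain_pred_of_notin_sources v : v \notin chain_sources cs ->
  exists u, (u, v) \in chainsE cs.
Proof.
case: cover => _ _ covered v_nsrc.
have /flattenP[[|a t] c_cs] := covered v; first by [].
rewrite in_cons => /predU1P[v_a|v_t].
  by subst a; move: v_nsrc; rewrite inE => /hasP[]; exists (v :: t).
have [u e] := @zip_behead_pred _ (a :: t) v v_t.
by exists u; apply/chainsEP; exists (a :: t).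
Qed.

Lemma Tmax_chain (T : 'I_n -> nat) u v : (u, v) \in chainsE cs -> Tmax cs T u = (T v).-1.
Proof.
move=> e; rewrite /Tmax; case: pickP => [w e'|none]; last by rewrite none in e.
by move: (chainsE_eq e' e); rewrite eqxx => /esym/eqP->.
Qed.

Lemma card_chainsE : (#|chainsE cs| <= #|~: chain_sources cs|)%N.
Proof.
rewrite -(@card_in_imset _ _ snd); last first.
  by move=> [u v] [u' v'] e e' /= v_eq; move: (chainsE_eq e e'); rewrite v_eq eqxx => /eqP->.
apply/subset_leq_card/subsetP => _ /imsetP[[u v] e ->].
by rewrite inE (chainsE_target_notin_sources e).
Qed.

End ChainCover.

Section TimeFunction.
Variables (n : nat) (cs : seq (seq 'I_n)) (T : 'I_n -> nat).
Hypotheses (cover : disjoint_chain_cover cs) (timeT : time_function cs T).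

Lemma source_of_time1 v : (T v <= 1)%N -> v \in chain_sources cs.
Proof.
case: timeT => T_range _ _ T_incr; apply: contraTT => v_nsrc.
have [u e] := chain_pred_of_notin_sources cover v_nsrc.
by have := T_incr _ _ e; have := T_range u; lia.
Qed.

Lemma time_le_n v : (T v <= n)%N.
Proof.
case: timeT => /(_ v) T_range _ _ _; case: cover => _ _ /(_ v) covered.
have cs_gt0 : (0 < size cs)%N by case: (cs) covered.
by move: T_range; rewrite /gamma; have := ltn_ord v; lia.
Qed.

Lemma graph_class_subset (E F : edgeset n) :
  in_graph_class cs T E -> chainsE cs \subset F -> F \subset E -> in_graph_class cs T F.
Proof.
move=> [_ time_ok] chains_F F_E; split=> // u v e; apply: time_ok.
exact: (subsetP F_E).
Qed.

End TimeFunction.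

Local Notation R := Rdefinitions.R.
Local Open Scope ring_scope.

Lemma controllableP n m (A : 'M[R]_n) (B : 'M[R]_(n, m)) :
  controllable A B <-> forall x : 'rV_n, (forall k : 'I_n, x *m A ^+ k *m B = 0) -> x = 0.
Proof.
rewrite /controllable; split=> [/eqP free x xAB0 | kernel0].
  apply/eqP; rewrite -(mulmx_free_eq0 _ free) mul_mxrow -(mxrow0 _).
  by apply/eqP/eq_mxrow => k; rewrite mulmxA xAB0.
apply/eqP/inj_row_free => x; rewrite mul_mxrow => x0; apply: kernel0 => k.
by have := congr1 (fun M => submxrow M k) x0; rewrite mxrowK submxrow0 mulmxA.
Qed.

Lemma not_controllable_zero_row n m (A : 'M[R]_n) (B : 'M[R]_(n, m)) v :
  row v A = 0 -> row v B = 0 -> ~ controllable A B.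
Proof.
move=> Av0 Bv0 /controllableP/(_ (delta_mx 0 v)) delta0.
have: (delta_mx 0 v : 'rV[R]_n) 0 v = 0.
  rewrite delta0 ?mxE // => -[[|k] lt_k] /=; first by rewrite expr0 mulmx1 -rowE.
  by rewrite exprS mulmxA -rowE Av0 !mul0mx.
by rewrite mxE !eqxx; apply/eqP; rewrite oner_eq0.
Qed.

Lemma mulmx_Bmat n (VC : {set 'I_n}) (y : 'rV[R]_n) k :
  (y *m Bmat VC) 0 k = y 0 (enum_val k).
Proof.
rewrite mxE (bigD1 (enum_val k)) //= big1 => [|i i_neq]; rewrite mxE.
  by rewrite eqxx mulr1 addr0.
by rewrite (negbTE i_neq) mulr0.
Qed.

(* The algebraic form of the colour-change rule: u forces v. *)
Lemma forcing_step n (A : 'M[R]_n) (y : 'rV[R]_n) u v :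
  A v u != 0 -> (y *m A) 0 u = 0 -> (forall i, i != v -> A i u != 0 -> y 0 i = 0) ->
  y 0 v = 0.
Proof.
move=> Avu yAu others; move: yAu; rewrite mxE (bigD1 v) //= big1 ?addr0.
  by move/eqP; rewrite mulf_eq0 (negbTE Avu) orbF => /eqP.
move=> i i_neq; have [->|Aiu] := eqVneq (A i u) 0; first by rewrite mulr0.
by rewrite others ?mul0r.
Qed.

Section GraphClassSSC.
Variables (n : nat) (cs : seq (seq 'I_n)) (T : 'I_n -> nat) (E : edgeset n).
Hypotheses (cover : disjoint_chain_cover cs) (timeT : time_function cs T).
Hypothesis classE : in_graph_class cs T E.
Variables (A : 'M[R]_n) (x : 'rV[R]_n).
Hypothesis A_Q : inQ E A.
Hypothesis x_ker : forall k : 'I_n, x *m A ^+ k *m Bmat (chain_sources cs) = 0.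

Lemma kernel_vanishes_by_time t j v :
  (j + t < n)%N -> (T v <= t.+1)%N -> (x *m A ^+ j) 0 v = 0.
Proof.
case: (timeT) => T_range T_src _ T_incr; case: classE => chains_E time_ok.
elim: t j v => [|t IH] j v lt_jt_n T_v.
  have v_src := source_of_time1 cover timeT T_v.
  have lt_j_n : (j < n)%N by lia.
  have := congr1 (fun M : 'rV[R]_#|chain_sources cs| => M 0 (enum_rank_in v_src v))
                 (x_ker (Ordinal lt_j_n)).
  by rewrite /= mulmx_Bmat enum_rankK_in // => ->; rewrite mxE.
have [|lt_t1_Tv] := leqP (T v) t.+1; first by apply: IH; lia.
have v_nsrc : v \notin chain_sources cs by apply: contraL lt_t1_Tv => /T_src->.
have [u e_uv] := chain_pred_of_notin_sources cover v_nsrc.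
have lt_Tu_Tv := T_incr _ _ e_uv.
have v_neq_u : v != u by apply: contraTneq lt_Tu_Tv => ->; rewrite ltnn.
apply: (@forcing_step _ A _ u).
- exact/(A_Q v_neq_u)/(subsetP chains_E).
- by rewrite -mulmxA mulmxE -exprSr; apply: IH; lia.
move=> i i_neq_v Aiu; have [->|i_neq_u] := eqVneq i u; first by apply: IH; lia.
have e_ui : (u, i) \in E by apply/(A_Q i_neq_u).
have [e_chain|e_nchain] := boolP ((u, i) \in chainsE cs).
  by move: (chainsE_eq cover e_chain e_uv); rewrite eqxx (negbTE i_neq_v).
have := time_ok _ _ e_ui e_nchain; rewrite (Tmax_chain cover T e_uv) => T_i.
by apply: IH; lia.
Qed.

End GraphClassSSC.

Lemma graph_class_SSC n cs T (E : edgeset n) :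
  disjoint_chain_cover cs -> time_function cs T -> in_graph_class cs T E ->
  SSC E (chain_sources cs).
Proof.
move=> cover timeT classE A A_Q; apply/controllableP => x x_ker; apply/rowP => v.
have := kernel_vanishes_by_time cover timeT classE A_Q x_ker (t := n.-1) (j := 0) (v := v).
rewrite expr0 mulmx1 mxE; apply.
  by have := ltn_ord v; lia.
by have := time_le_n cover timeT v; lia.
Qed.

Definition adj_mx n (F : edgeset n) : 'M[R]_n :=
  \matrix_(i, j) ((i != j) && ((j, i) \in F))%:R.

Lemma adj_mx_inQ n (F : edgeset n) : inQ F (adj_mx F).
Proof.
move=> i j ij; rewrite mxE ij /=.
by case: ((j, i) \in F); rewrite ?oner_eq0 ?eqxx.
Qed.

Lemma SSC_in_edge n (F : edgeset n) VC v : SSC F VC -> v \notin VC ->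
  exists2 u, u != v & (u, v) \in F.
Proof.
move=> ssc v_nc; apply/exists_inP; apply: contraPT (ssc _ (adj_mx_inQ F)).
move/exists_inPn => no_in_edge; apply: (@not_controllable_zero_row _ _ _ _ v).
  apply/rowP => w; rewrite !mxE.
  by have [->|/(no_in_edge w)/negbTE->] := eqVneq w v; rewrite ?eqxx ?andbF.
apply/rowP => k; rewrite !mxE.
by have [v_k|] := eqVneq v (enum_val k); [rewrite v_k enum_valP in v_nc|].
Qed.

Lemma card_notin_le_SSC n (F : edgeset n) VC : SSC F VC -> (#|~: VC| <= #|F|)%N.
Proof.
move=> ssc; apply: leq_trans (leq_imset_card snd F).
apply/subset_leq_card/subsetP => v; rewrite inE => v_nc.
by have [u _ e] := SSC_in_edge ssc v_nc; apply/imsetP; exists (u, v).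
Qed.

Lemma subtractive_card_le n (E : edgeset n) VC Es :
  subtractive E VC Es -> (#|Es| + #|~: VC| <= #|E|)%N.
Proof.
move=> [Es_E sub]; have := card_notin_le_SSC (sub _ (subxx Es)).
rewrite cardsD (setIidPr Es_E); have := subset_leq_card Es_E; lia.
Qed.

Lemma critical_subtractive_of_tight n (E : edgeset n) VC Es :
  subtractive E VC Es -> (#|Es| + #|~: VC| = #|E|)%N -> critical_subtractive E VC Es.
Proof.
move=> Es_sub tight; split=> //; split; first by exists Es.
by move=> Es' /subtractive_card_le; rewrite -tight leq_add2r.
Qed.

Theorem proposition3 (n : nat) (E : {set 'I_n * 'I_n}) (VC : {set 'I_n})
    (cs : seq (seq 'I_n)) (T : 'I_n -> nat) :
  zero_forcing_set E VC ->
  size cs = #|VC| ->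
  disjoint_chain_cover cs ->
  chain_sources cs = VC ->
  time_function cs T ->
  in_graph_class cs T E ->
  critical_subtractive E VC (E :\: chainsE cs) /\
  is_ncsub E VC (#|E| + #|VC| - n)%N.
Proof.
move=> _ _ cover <-{VC} timeT classE.
have chains_E : chainsE cs \subset E by case: classE.
have Es_sub : subtractive E (chain_sources cs) (E :\: chainsE cs).
  split=> [|E' E'_sub]; first exact: subsetDl.
  apply: graph_class_SSC cover timeT (graph_class_subset classE _ (subsetDl _ _)).
  apply/subsetP => e e_chain; rewrite inE (subsetP chains_E) // andbT.
  by apply: contraL e_chain => /(subsetP E'_sub); rewrite inE => /andP[].
have tight : (#|E :\: chainsE cs| + #|~: chain_sources cs| = #|E|)%N.
  apply/eqP; rewrite eqn_leq subtractive_card_le //= cardsD (setIidPr chains_E).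
  rewrite -[X in (X <= _)%N](subnK (subset_leq_card chains_E)) leq_add2l.
  exact: card_chainsE.
have [crit ncsub] := critical_subtractive_of_tight Es_sub tight.
suff -> : (#|E| + #|chain_sources cs| - n)%N = #|E :\: chainsE cs| by [].
by move: tight; have := cardsC (chain_sources cs); rewrite card_ord; lia.
Qed.
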